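(* Take $N=2$. For $\sigma,\tau\in\{X,Y,Z\}$ let $C(\sigma,\tau)_{01}=\tfrac12(I+\sigma_0)+\tfrac12(I-\sigma_0)\tau_1$ (so $C(Z,X)_{01}=\mathrm{CX}_{01}$ and $C(Z,Z)_{01}=\mathrm{CZ}_{01}$). Then: (i) the nine frames $C(\sigma,\tau)_{01}\cdot B_0$ (backward action) lie in nine pairwise distinct EEF classes, none of which equals $[B_0]$; and (ii) for all unitaries $L_1,L_2$ in the group generated by single-qubit Clifford gates and $\mathrm{SWAP}_{01}$, the frame $(L_2\,\mathrm{CX}_{01}\,L_1)\cdot B_0$ lies in one of these nine EEF classes. Consequently, in $[\mathrm{PFG}_N]$ each vertex has, for each pair of qubits, exactly nine neighbours reachable by a single two-qubit entangling gate on that pair.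
   Context: Pauli space: $\mathcal P$ is the set of $N$-qubit Pauli operators modulo overall phase, an $\mathbb F_2$-vector space with addition given by product (mod phase); $\lambda(p,q)\in\mathbb F_2$ is $0$ if $p,q$ commute and $1$ otherwise. A Pauli frame is an ordered tuple $B=\{(s_i,\tilde s_i)\}_{0\le i<N}$ of elements of $\mathcal P$ with $\lambda(s_i,s_j)=\lambda(\tilde s_i,\tilde s_j)=0$, $\lambda(s_i,\tilde s_j)=\delta_{ij}$. The origin frame is $B_0=\{(Z_i,X_i)\}_i$. For a frame $B$ let $\phi_B$ be the linear map of $\mathcal P$ with $\phi_B(Z_i)=s_i$, $\phi_B(X_i)=\tilde s_i$. The backward action of a Clifford unitary $V$ on a frame $B$ is $V\cdot B:=\{(\phi_B(V^\dagger Z_iV),\phi_B(V^\dagger X_iV))\}_i$ (mod phase); in particular $V\cdot B_0=\{(V^\dagger Z_iV,V^\dagger X_iV)\}_i$. $\bar E_N$ is the group of actions on frames generated by the backward actions of $\mathrm{SWAP}_{ij}$, Hadamard $H_i$ and phase gate $P_i=R_Z(\pi/2)$. The EEF class of $B$ is $[B]=\{\gamma\cdot B:\gamma\in\bar E_N\}$. $[\mathrm{PFG}_N]$ is the graph on EEF classes with $[B_1],[B_2]$ adjacent iff $B_2'=\mathrm{CX}_{ij}\cdot B_1'$ for some $B_1'\in[B_1]$, $B_2'\in[B_2]$, $i\neq j$. *)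

From mathcomp Require Import all_boot.
From Stdlib Require Import Relations.
Set Implicit Arguments. Unset Strict Implicit. Unset Printing Implicit Defensive.

(* A Pauli mod phase is given, qubit by qubit, by its (Z-bit, X-bit):
   I = (false,false), Z = (true,false), X = (false,true), Y = (true,true). *)
Definition pauli (N : nat) := {ffun 'I_N -> bool * bool}.

(* group law of P (product mod phase) = F_2 addition *)
Definition padd N (p q : pauli N) : pauli N :=
  [ffun k => ((p k).1 (+) (q k).1, (p k).2 (+) (q k).2)].
Definition pzero N : pauli N := [ffun _ => (false, false)].

Definition Zq N (i : 'I_N) : pauli N := [ffun k => (k == i, false)].
Definition Xq N (i : 'I_N) : pauli N := [ffun k => (false, k == i)].
Definition Yq N (i : 'I_N) : pauli N := padd (Zq i) (Xq i).

(* lambda(p,q) : false iff p and q commute *)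
Definition lam N (p q : pauli N) : bool :=
  \big[addb/false]_(k < N) (((p k).1 && (q k).2) (+) ((p k).2 && (q k).1)).

(* B i = (s_i, s~_i) *)
Definition frame (N : nat) := {ffun 'I_N -> pauli N * pauli N}.

Definition is_frame N (B : frame N) : Prop :=
  forall i j : 'I_N,
    lam (B i).1 (B j).1 = false /\ lam (B i).2 (B j).2 = false /\
    lam (B i).1 (B j).2 = (i == j).

Definition origin N : frame N := [ffun i => (Zq i, Xq i)].

Definition phi N (B : frame N) (p : pauli N) : pauli N :=
  \big[@padd N/pzero N]_(k < N)
     padd (if (p k).1 then (B k).1 else pzero N)
          (if (p k).2 then (B k).2 else pzero N).

(* ---------- Clifford unitaries via their conjugation action ----------
   A Clifford unitary V is represented by its map c_V : p |-> V^dag p V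
   (mod phase) on P; this is all that the backward action uses.  For a
   product, c_(V W) = c_W \o c_V. *)

Definition act N (c : pauli N -> pauli N) (B : frame N) : frame N :=
  [ffun i => (phi B (c (Zq i)), phi B (c (Xq i)))].

Definition cH N (i : 'I_N) (p : pauli N) : pauli N :=
  [ffun k => if k == i then ((p k).2, (p k).1) else p k].
(* phase gate P_i = R_Z(pi/2): P^dag Z P = Z, P^dag X P = -Y, P^dag Y P = X *)
Definition cP N (i : 'I_N) (p : pauli N) : pauli N :=
  [ffun k => if k == i then ((p k).1 (+) (p k).2, (p k).2) else p k].
Definition cSWAP N (i j : 'I_N) (p : pauli N) : pauli N :=
  [ffun k => if k == i then p j else if k == j then p i else p k].

(* Controlled gate C = 1/2 (I + s) + 1/2 (I - s) t for commuting Hermitian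
   Paulis s, t (C = C^dag).  One computes C p C = p, p t, p s, p s t (mod
   phase) according to whether p anticommutes with neither, s only, t only,
   or both. *)
Definition cCtrl N (s t : pauli N) (p : pauli N) : pauli N :=
  padd p (padd (if lam p s then t else pzero N) (if lam p t then s else pzero N)).

Inductive pauli1 := PX | PY | PZ.
Definition pq N (a : pauli1) (i : 'I_N) : pauli N :=
  match a with PX => Xq i | PY => Yq i | PZ => Zq i end.

Definition cC N (a b : pauli1) (i j : 'I_N) : pauli N -> pauli N :=
  cCtrl (pq a i) (pq b j).
Definition cCX N (i j : 'I_N) : pauli N -> pauli N := cCtrl (Zq i) (Xq j).

(* one step of the group bar E_N (generated by backward actions of SWAP, H, P),
   in either direction (so the closure below is the orbit of the group) *)
Definition gen_conj N (c : pauli N -> pauli N) : Prop :=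
  (exists i j : 'I_N, c = cSWAP i j) \/ (exists i, c = cH i) \/ (exists i, c = cP i).

Definition eef_step N (B1 B2 : frame N) : Prop :=
  exists c, gen_conj c /\ (B2 = act c B1 \/ B1 = act c B2).

Definition EEF N : relation (frame N) := clos_refl_trans (frame N) (@eef_step N).

Definition pfg_adj N (B1 B2 : frame N) : Prop :=
  exists (B1' B2' : frame N) (i j : 'I_N),
    i != j /\ EEF B1 B1' /\ EEF B2 B2' /\ B2' = act (cCX i j) B1'.

(* ---------- group generated by single-qubit Cliffords and SWAP ----------
   (conjugation maps; the single-qubit Clifford group mod phase is generated
   by H and P) *)
Inductive locCliff N : (pauli N -> pauli N) -> Prop :=
| lc_id : locCliff (fun p => p)
| lc_H i : locCliff (cH i)
| lc_P i : locCliff (cP i)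
| lc_SWAP i j : locCliff (cSWAP i j)
| lc_comp f g : locCliff f -> locCliff g -> locCliff (fun p => f (g p))
| lc_inv f g : locCliff f -> cancel f g -> cancel g f -> locCliff g.

Definition q0 : 'I_2 := ord0.
Definition q1 : 'I_2 := ord_max.

(* For N = 2 everything is finite, so the proof translates the statement
   into symplectic linear algebra over F_2 and lets the kernel check the
   finitely many resulting facts by computation.
   - A two-qubit Pauli mod phase is a vector of F_2^4 (record P4) and a
     frame B is the 4x4 matrix (record F4) of its linear map phi_B; the
     backward action of a Clifford V becomes the matrix product
     fromF (V . B) = fromF B * M_V, where M_V represents c_V.
   - The group bar E_2 generated by H_0, H_1, P_0, P_1, SWAP_01 becomes an
     explicit list GM of 72 matrices (S_3 x S_3 extended by the swap), each
     given by a word in the generators; GM is checked to be a group, so two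
     frames are EEF-equivalent iff they differ by right multiplication by
     an element of GM (eef_sound, eef_complete).  The group generated by
     local Cliffords and SWAP also acts through GM (locCliff_represented).
   - The theorem thus reduces to statements about the nine matrices
     cmat a b of C(a,b)_01 and the double cosets GM * CX * GM, which are
     certified by vm_compute.  Since a frame B is an invertible matrix,
     these facts transfer from the origin to every frame B by left
     multiplication with fromF B, which yields the nine neighbours of [B]
     in [PFG_2] (controlled_neighbour, neighbour_cover). *)
From mathcomp Require Import all_boot.
From Stdlib Require Import Relations Btauto.
From HB Require Import structures.
Set Implicit Arguments. Unset Strict Implicit. Unset Printing Implicit Defensive.

(* A two-qubit Pauli mod phase as its symplectic bits: Z- and X-bit of
   qubit 0, then of qubit 1. *)
Record P4 := mkP { pz0 : bool; px0 : bool; pz1 : bool; px1 : bool }.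

(* A two-qubit frame as the images (s_0, s~_0, s_1, s~_1) of Z_0, X_0, Z_1,
   X_1 under phi_B, i.e. as a 4x4 matrix over F_2 given by its columns. *)
Record F4 := mkF { s0 : P4; t0 : P4; s1 : P4; t1 : P4 }.

Definition eqP4 (p q : P4) : bool :=
  [&& pz0 p == pz0 q, px0 p == px0 q, pz1 p == pz1 q & px1 p == px1 q].
Lemma eqP4P : Equality.axiom eqP4.
Proof.
move=> [? ? ? ?] [? ? ? ?]; apply: (iffP and4P) => /= [[/eqP-> /eqP-> /eqP-> /eqP->] //|].
by case=> -> -> -> ->.
Qed.
HB.instance Definition _ := hasDecEq.Build P4 eqP4P.

Definition eqF4 (M A : F4) : bool :=
  [&& s0 M == s0 A, t0 M == t0 A, s1 M == s1 A & t1 M == t1 A].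
Lemma eqF4P : Equality.axiom eqF4.
Proof.
move=> [? ? ? ?] [? ? ? ?]; apply: (iffP and4P) => /= [[/eqP-> /eqP-> /eqP-> /eqP->] //|].
by case=> -> -> -> ->.
Qed.
HB.instance Definition _ := hasDecEq.Build F4 eqF4P.

Definition eqpauli1 (a b : pauli1) : bool :=
  match a, b with PX, PX | PY, PY | PZ, PZ => true | _, _ => false end.
Lemma eqpauli1P : Equality.axiom eqpauli1.
Proof. by case; case; constructor. Qed.
HB.instance Definition _ := hasDecEq.Build pauli1 eqpauli1P.

Definition addP (p q : P4) : P4 :=
  mkP (xorb (pz0 p) (pz0 q)) (xorb (px0 p) (px0 q))
      (xorb (pz1 p) (pz1 q)) (xorb (px1 p) (px1 q)).
Definition zP : P4 := mkP false false false false.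
Definition scP (b : bool) (p : P4) : P4 :=
  mkP (b && pz0 p) (b && px0 p) (b && pz1 p) (b && px1 p).
Definition lamF (p q : P4) : bool :=
  xorb (xorb (pz0 p && px0 q) (px0 p && pz0 q))
       (xorb (pz1 p && px1 q) (px1 p && pz1 q)).

Definition phiF (M : F4) (x : P4) : P4 :=
  addP (addP (addP (scP (pz0 x) (s0 M)) (scP (px0 x) (t0 M)))
             (scP (pz1 x) (s1 M)))
       (scP (px1 x) (t1 M)).

Definition compF (M A : F4) : F4 :=
  mkF (phiF M (s0 A)) (phiF M (t0 A)) (phiF M (s1 A)) (phiF M (t1 A)).

Definition ez0 : P4 := mkP true false false false.
Definition ex0 : P4 := mkP false true false false.
Definition ez1 : P4 := mkP false false true false.
Definition ex1 : P4 := mkP false false false true.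
Definition idF : F4 := mkF ez0 ex0 ez1 ex1.

Definition matOf (f : P4 -> P4) : F4 := mkF (f ez0) (f ex0) (f ez1) (f ex1).

(* Identities between explicit coordinates are boolean tautologies. *)
Ltac bool_solve :=
  intros; rewrite /compF /phiF /addP /scP /lamF /matOf /idF /ez0 /ex0 /ez1 /ex1 /=;
  repeat match goal with
         | |- mkP _ _ _ _ = mkP _ _ _ _ => f_equal
         | |- mkF _ _ _ _ = mkF _ _ _ _ => f_equal
         end; btauto.

(* phiF M is linear; hence compF is associative with unit idF. *)
Lemma phiF_add M x y : phiF M (addP x y) = addP (phiF M x) (phiF M y).
Proof. case: M => [[? ? ? ?] [? ? ? ?] [? ? ? ?] [? ? ? ?]]; case: x; case: y; bool_solve. Qed.

Lemma phiF_sc M b x : phiF M (scP b x) = scP b (phiF M x).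
Proof. case: M => [[? ? ? ?] [? ? ? ?] [? ? ? ?] [? ? ? ?]]; case: x; bool_solve. Qed.

Lemma phiF_comp M A x : phiF (compF M A) x = phiF M (phiF A x).
Proof. by rewrite {3}/phiF !phiF_add !phiF_sc. Qed.

Lemma compFA M A C : compF (compF M A) C = compF M (compF A C).
Proof. by rewrite /compF !phiF_comp. Qed.

Lemma phiF_id x : phiF idF x = x.
Proof. case: x; bool_solve. Qed.

Lemma comp1F M : compF idF M = M.
Proof. by rewrite /compF !phiF_id; case: M. Qed.

Lemma compF1 M : compF M idF = M.
Proof. case: M => [[? ? ? ?] [? ? ? ?] [? ? ? ?] [? ? ? ?]]; bool_solve. Qed.

Lemma matOf_phiF M : matOf (phiF M) = M.
Proof. case: M => [[? ? ? ?] [? ? ? ?] [? ? ? ?] [? ? ? ?]]; bool_solve. Qed.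

Lemma lamF_sym p q : lamF p q = lamF q p.
Proof. case: p; case: q; bool_solve. Qed.

Lemma lamF_self p : lamF p p = false.
Proof. case: p; bool_solve. Qed.

Definition sympF (M : F4) : Prop :=
  [/\ lamF (s0 M) (t0 M) = true, lamF (s1 M) (t1 M) = true,
      lamF (s0 M) (t1 M) = false, lamF (s1 M) (t0 M) = false &
      lamF (s0 M) (s1 M) = false /\ lamF (t0 M) (t1 M) = false].

(* The symplectic inverse x |-> (lambda(x, s~_0), lambda(x, s_0), ...). *)
Definition invF (M : F4) : F4 :=
  matOf (fun x => mkP (lamF x (t0 M)) (lamF x (s0 M)) (lamF x (t1 M)) (lamF x (s1 M))).

Lemma phiF_invF M x :
  phiF (invF M) x = mkP (lamF x (t0 M)) (lamF x (s0 M)) (lamF x (t1 M)) (lamF x (s1 M)).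
Proof.
case: M => [[? ? ? ?] [? ? ? ?] [? ? ? ?] [? ? ? ?]].
case: x; rewrite /invF; bool_solve.
Qed.

Lemma invF_l M : sympF M -> compF (invF M) M = idF.
Proof.
case: M => a b c d [/= h1 h2 h3 h4 [h5 h6]].
rewrite /compF !phiF_invF /= (lamF_sym b a) (lamF_sym b c) (lamF_sym c a).
by rewrite (lamF_sym d b) (lamF_sym d a) (lamF_sym d c) !lamF_self h1 h2 h3 h4 h5 h6.
Qed.

Definition fromP (p : pauli 2) : P4 := mkP (p q0).1 (p q0).2 (p q1).1 (p q1).2.
Definition fromF (B : frame 2) : F4 :=
  mkF (fromP (B q0).1) (fromP (B q0).2) (fromP (B q1).1) (fromP (B q1).2).
Definition toP (x : P4) : pauli 2 :=
  [ffun k => if k == q0 then (pz0 x, px0 x) else (pz1 x, px1 x)].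
Definition toB (M : F4) : frame 2 :=
  [ffun k => if k == q0 then (toP (s0 M), toP (t0 M)) else (toP (s1 M), toP (t1 M))].

Lemma ord2 (i : 'I_2) : i = q0 \/ i = q1.
Proof. by case: i => [[|[|//]] ?]; [left | right]; apply/val_inj. Qed.

Lemma fromP_toP x : fromP (toP x) = x.
Proof. by case: x => ? ? ? ?; rewrite /fromP !ffunE. Qed.

Lemma fromF_toB M : fromF (toB M) = M.
Proof. by case: M => ? ? ? ?; rewrite /fromF !ffunE /= !fromP_toP. Qed.

Lemma fromP_inj : injective fromP.
Proof.
move=> p q [e0 e0' e1 e1']; apply/ffunP => k.
by case: (ord2 k) => ->; rewrite [LHS]surjective_pairing [RHS]surjective_pairing; congr pair.
Qed.

Lemma fromF_inj : injective fromF.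
Proof.
move=> B B' e; apply/ffunP => k.
case: (ord2 k) => ->; rewrite [LHS]surjective_pairing [RHS]surjective_pairing;
  congr pair; apply: fromP_inj.
- exact (congr1 s0 e).
- exact (congr1 t0 e).
- exact (congr1 s1 e).
- exact (congr1 t1 e).
Qed.

(* The coordinates use xorb, the connective understood by btauto. *)
Lemma addb_xorb a b : a (+) b = xorb a b.
Proof. by case: a. Qed.

Lemma fromP_padd p q : fromP (padd p q) = addP (fromP p) (fromP q).
Proof. by rewrite /fromP /padd !ffunE /= !addb_xorb. Qed.

Lemma fromP_pzero : fromP (pzero 2) = zP.
Proof. by rewrite /fromP !ffunE. Qed.

Lemma fromP_if b p q : fromP (if b then p else q) = if b then fromP p else fromP q.
Proof. by case: b. Qed.

Lemma fromP_basis :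
  [/\ fromP (Zq q0) = ez0, fromP (Xq q0) = ex0, fromP (Zq q1) = ez1 & fromP (Xq q1) = ex1].
Proof. by split; rewrite /fromP !ffunE. Qed.

(* The second summand of a big operator over 'I_2 is indexed by q1. *)
Lemma lift0_q1 : lift ord0 (ord0 : 'I_1) = q1.
Proof. exact: val_inj. Qed.

Lemma lam_from p q : lam p q = lamF (fromP p) (fromP q).
Proof.
rewrite /lam big_ord_recl big_ord1 lift0_q1 -/q0 /lamF /fromP.
by case: (p q0) (p q1) (q q0) (q q1) => [[] []] [[] []] [[] []] [[] []].
Qed.

Lemma fromP_scale b p : fromP (if b then p else pzero 2) = scP b (fromP p).
Proof. by case: b; [case: (fromP p) | exact: fromP_pzero]. Qed.

Lemma phi_from B p : fromP (phi B p) = phiF (fromF B) (fromP p).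
Proof.
rewrite /phi !big_ord_recl big_ord0 lift0_q1 -/q0 !fromP_padd !fromP_scale fromP_pzero.
rewrite /fromF /phiF /=.
case: (fromP (B q0).1) (fromP (B q0).2) (fromP (B q1).1) (fromP (B q1).2) => *.
bool_solve.
Qed.

Definition represents (c : pauli 2 -> pauli 2) (M : F4) : Prop :=
  forall p, fromP (c p) = phiF M (fromP p).

Lemma act_matOf c f B : (forall p, fromP (c p) = f (fromP p)) ->
  fromF (act c B) = compF (fromF B) (matOf f).
Proof.
have [e0 e0' e1 e1'] := fromP_basis.
by move=> cf; rewrite /fromF /act !ffunE /= !phi_from !cf e0 e0' e1 e1'.
Qed.

Lemma act_represented c M B : represents c M -> fromF (act c B) = compF (fromF B) M.
Proof. by move/act_matOf->; rewrite matOf_phiF. Qed.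

Definition ctrlF (s t p : P4) : P4 :=
  addP p (addP (if lamF p s then t else zP) (if lamF p t then s else zP)).

Lemma ctrl_from s t p : fromP (cCtrl s t p) = ctrlF (fromP s) (fromP t) (fromP p).
Proof. by rewrite /cCtrl !fromP_padd !fromP_if !lam_from fromP_pzero. Qed.

Inductive gen := GH0 | GH1 | GP0 | GP1 | GS.

Definition gfun (g : gen) : pauli 2 -> pauli 2 :=
  match g with
  | GH0 => cH q0 | GH1 => cH q1 | GP0 => cP q0 | GP1 => cP q1 | GS => cSWAP q0 q1
  end.

Definition gmat (g : gen) : F4 :=
  match g with
  | GH0 => mkF ex0 ez0 ez1 ex1
  | GH1 => mkF ez0 ex0 ex1 ez1
  | GP0 => mkF ez0 (addP ez0 ex0) ez1 ex1
  | GP1 => mkF ez0 ex0 ez1 (addP ez1 ex1)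
  | GS => mkF ez1 ex1 ez0 ex0
  end.

Lemma gfun_gen_conj g : gen_conj (gfun g).
Proof.
case: g; rewrite /gen_conj /=.
- by right; left; exists q0.
- by right; left; exists q1.
- by right; right; exists q0.
- by right; right; exists q1.
- by left; exists q0, q1.
Qed.

Lemma gfun_represented g : represents (gfun g) (gmat g).
Proof.
move=> p; case: g; rewrite /= /fromP /cH /cP /cSWAP !ffunE /=;
  by case: (p q0) => [[] []]; case: (p q1) => [[] []].
Qed.

Lemma swap_self_represented i : represents (cSWAP i i) idF.
Proof.
move=> p; rewrite phiF_id; congr fromP; apply/ffunP => k.
by rewrite ffunE; case: eqP => // ->.
Qed.

Lemma swap10_represented : represents (cSWAP q1 q0) (gmat GS).
Proof.
move=> p; rewrite /fromP /cSWAP !ffunE /=.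
by case: (p q0) => [[] []]; case: (p q1) => [[] []].
Qed.

Fixpoint matW (w : seq gen) : F4 :=
  if w is g :: w' then compF (gmat g) (matW w') else idF.

(* The six elements of the single-qubit Clifford group mod Pauli (~ S_3),
   as words in its two involutions H and P. *)
Definition qubit_words (h p : gen) : seq (seq gen) :=
  [:: [::]; [:: h]; [:: p]; [:: h; p]; [:: p; h]; [:: h; p; h]].

(* Words for all 72 elements of bar E_2 = (S_3 x S_3) x| Z_2. *)
Definition GW : seq (seq gen) :=
  [seq w0 ++ w1 | w0 <- qubit_words GH0 GP0,
     w1 <- [seq w ++ ws | w <- qubit_words GH1 GP1, ws <- [:: [::]; [:: GS]]]].

Definition GM : seq F4 := map matW GW.

Lemma GM_id : idF \in GM.
Proof. by vm_compute. Qed.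

Lemma GM_comp M A : M \in GM -> A \in GM -> compF M A \in GM.
Proof.
have chk : all (fun M => all (fun A => compF M A \in GM) GM) GM by vm_compute.
by move=> hM hA; exact: allP (allP chk M hM) A hA.
Qed.

Lemma GM_inv M : M \in GM -> exists2 M', M' \in GM & compF M M' = idF.
Proof.
have chk : all (fun M => has (fun M' => compF M M' == idF) GM) GM by vm_compute.
by move=> hM; have /hasP[M' hM' /eqP] := allP chk M hM; exists M'.
Qed.

Lemma gmat_GM g : gmat g \in GM /\ compF (gmat g) (gmat g) = idF.
Proof. by case: g; split; vm_compute. Qed.

Lemma gen_conj_represented c : gen_conj c ->
  exists M, [/\ M \in GM, compF M M = idF & represents c M].
Proof.
have of_gen g : exists M, [/\ M \in GM, compF M M = idF & represents (gfun g) M].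
  by have [hg hgg] := gmat_GM g; exists (gmat g); split=> //; exact: gfun_represented.
have swap_self i : exists M, [/\ M \in GM, compF M M = idF & represents (cSWAP i i) M].
  by exists idF; split; [exact: GM_id | exact: comp1F | exact: swap_self_represented].
case=> [[i [j ->]] | [[i ->] | [i ->]]].
- case: (ord2 i) (ord2 j) => -> [] ->; [exact: swap_self | exact: (of_gen GS) | | exact: swap_self].
  by have [hg hgg] := gmat_GM GS; exists (gmat GS); split=> //; exact: swap10_represented.
- by case: (ord2 i) => ->; [exact: (of_gen GH0) | exact: (of_gen GH1)].
- by case: (ord2 i) => ->; [exact: (of_gen GP0) | exact: (of_gen GP1)].
Qed.

Lemma eef_sound B1 B2 : EEF B1 B2 -> exists2 M, M \in GM & fromF B2 = compF (fromF B1) M.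
Proof.
elim=> {B1 B2} [B1 B2 [c [/gen_conj_represented[M [hM hMM hc]] [->|->]]] | B
               | B1 B2 B3 _ [M1 h1 e1] _ [M2 h2 e2]].
- by exists M => //; exact: act_represented.
- by exists M => //; rewrite (act_represented _ hc) compFA hMM compF1.
- by exists idF; [exact: GM_id | rewrite compF1].
- by exists (compF M1 M2); [exact: GM_comp | rewrite e2 e1 compFA].
Qed.

Lemma eef_word w B B' : fromF B' = compF (fromF B) (matW w) -> EEF B B'.
Proof.
elim: w B => [|g w IH] B e.
  by rewrite compF1 in e; rewrite (fromF_inj e); exact: rt_refl.
apply: (rt_trans _ _ _ (act (gfun g) B)).
  by apply: rt_step; exists (gfun g); split; [exact: gfun_gen_conj | left].
by apply: IH; rewrite (act_represented _ (gfun_represented g)) compFA.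
Qed.

(* Membership in a map over a type without decidable equality. *)
Lemma in_map_preimage (T : Type) (U : eqType) (f : T -> U) s y :
  y \in map f s -> exists x, y = f x.
Proof.
by elim: s => //= x s IH; rewrite inE => /orP[/eqP->|/IH//]; exists x.
Qed.

Lemma eef_complete M B B' : M \in GM -> fromF B' = compF (fromF B) M -> EEF B B'.
Proof. by move=> /in_map_preimage[w ->]; exact: eef_word. Qed.

Lemma locCliff_represented f : locCliff f -> exists2 M, M \in GM & represents f M.
Proof.
have of_gen c : gen_conj c -> exists2 M, M \in GM & represents c M.
  by case/gen_conj_represented=> M [hM _ hc]; exists M.
elim=> {f} [|i|i|i j|f g _ [Mf hf ef] _ [Mg hg eg]|f g _ [Mf hf ef] fg gf].
- by exists idF; [exact: GM_id | move=> p; rewrite phiF_id].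
- by apply: of_gen; right; left; exists i.
- by apply: of_gen; right; right; exists i.
- by apply: of_gen; left; exists i, j.
- by exists (compF Mf Mg); [exact: GM_comp | move=> p; rewrite ef eg phiF_comp].
- have [M' hM' eM'] := GM_inv hf; exists M' => // p.
  have fq : f (toP (phiF M' (fromP p))) = p.
    by apply: fromP_inj; rewrite ef fromP_toP -phiF_comp eM' phiF_id.
  by rewrite -{1}fq fg fromP_toP.
Qed.

Lemma EEF_sym N (B1 B2 : frame N) : EEF B1 B2 -> EEF B2 B1.
Proof.
elim=> [{}B1 {}B2 [c [gc e]] | B | B1' B2' B3 _ e12 _ e23].
- by apply: rt_step; exists c; split=> //; case: e; [right | left].
- exact: rt_refl.
- exact: rt_trans e23 e12.
Qed.

Lemma frame_cancel B : is_frame B -> compF (invF (fromF B)) (fromF B) = idF.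
Proof.
move=> hB; apply: invF_l.
have [_ [_ e00]] := hB q0 q0; have [_ [_ e11]] := hB q1 q1.
have [h01 [h01' e01]] := hB q0 q1; have [_ [_ e10]] := hB q1 q0.
by move: e00 e11 e01 e10 h01 h01'; rewrite !lam_from /sympF /= => -> -> -> -> -> ->.
Qed.

Lemma origin_frame : is_frame (origin 2).
Proof.
have [e0 e0' e1 e1'] := fromP_basis.
move=> i j; rewrite !ffunE /= !lam_from.
by case: (ord2 i) (ord2 j) => -> [] ->; rewrite ?e0 ?e0' ?e1 ?e1'.
Qed.

Definition pauli0F (a : pauli1) : P4 :=
  match a with PX => ex0 | PY => addP ez0 ex0 | PZ => ez0 end.
Definition pauli1F (a : pauli1) : P4 :=
  match a with PX => ex1 | PY => addP ez1 ex1 | PZ => ez1 end.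
Definition cmat (a b : pauli1) : F4 := matOf (ctrlF (pauli0F a) (pauli1F b)).
Definition CX01 : F4 := matOf (ctrlF ez0 ex1).
Definition CX10 : F4 := matOf (ctrlF ez1 ex0).

Lemma cC_act a b B : fromF (act (cC a b q0 q1) B) = compF (fromF B) (cmat a b).
Proof.
have [e0 e0' e1 e1'] := fromP_basis.
have pauli0 : fromP (pq a q0) = pauli0F a by case: a; rewrite /= ?fromP_padd ?e0 ?e0'.
have pauli1 : fromP (pq b q1) = pauli1F b by case: b; rewrite /= ?fromP_padd ?e1 ?e1'.
by apply: act_matOf => p; rewrite /cC ctrl_from pauli0 pauli1.
Qed.

Lemma CX_represented :
  represents (cCX q0 q1) CX01 /\ represents (cCX q1 q0) CX10.
Proof.
have [e0 e0' e1 e1'] := fromP_basis.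
by split=> p; rewrite /cCX ctrl_from ?e0 ?e0' ?e1 ?e1'; case: (fromP p) => [[] [] [] []].
Qed.

Definition pauli1s : seq pauli1 := [:: PX; PY; PZ].
Lemma mem_pauli1s a : a \in pauli1s.
Proof. by case: a. Qed.

Lemma cmat_cosets_distinct a b a' b' M :
  M \in GM -> cmat a' b' = compF (cmat a b) M -> a = a' /\ b = b'.
Proof.
have chk : all (fun a => all (fun b => all (fun a' => all (fun b' => all (fun M =>
    (compF (cmat a b) M == cmat a' b') ==> (a == a') && (b == b')) GM)
    pauli1s) pauli1s) pauli1s) pauli1s by vm_compute.
move=> hM e; move/allP: chk => /(_ a (mem_pauli1s a)) /allP /(_ b (mem_pauli1s b)).
move=> /allP /(_ a' (mem_pauli1s a')) /allP /(_ b' (mem_pauli1s b')) /allP /(_ M hM).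
by rewrite -e eqxx => /andP[/eqP-> /eqP->].
Qed.

Lemma cmat_notin_GM a b : cmat a b \notin GM.
Proof.
have chk : all (fun a => all (fun b => cmat a b \notin GM) pauli1s) pauli1s by vm_compute.
by move/allP: chk => /(_ a (mem_pauli1s a)) /allP /(_ b (mem_pauli1s b)).
Qed.

Lemma cmat_CX_double_coset a b :
  exists M, exists2 M', M \in GM /\ M' \in GM & compF (cmat a b) M' = compF M CX01.
Proof.
have chk : all (fun a => all (fun b => has (fun M => has (fun M' =>
    compF (cmat a b) M' == compF M CX01) GM) GM) pauli1s) pauli1s by vm_compute.
move/allP: chk => /(_ a (mem_pauli1s a)) /allP /(_ b (mem_pauli1s b)).
by case/hasP=> M hM /hasP[M' hM' /eqP e]; exists M, M'.
Qed.

Lemma CX_double_coset_cover M1 X : M1 \in GM -> X \in [:: CX01; CX10] ->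
  exists a b, exists2 M, M \in GM & cmat a b = compF (compF M1 X) M.
Proof.
have chk : all (fun M1 => all (fun X => has (fun a => has (fun b => has (fun M =>
    cmat a b == compF (compF M1 X) M) GM) pauli1s) pauli1s) [:: CX01; CX10]) GM
  by vm_compute.
move=> hM1 hX; move/allP: chk => /(_ M1 hM1) /allP /(_ X hX).
by case/hasP=> a _ /hasP[b _ /hasP[M hM /eqP e]]; exists a, b, M.
Qed.

Lemma frame_cancel_l B M A : is_frame B ->
  compF (fromF B) M = compF (fromF B) A -> M = A.
Proof.
move=> hB /(congr1 (compF (invF (fromF B)))).
by rewrite -!compFA frame_cancel // !comp1F.
Qed.

Lemma controlled_classes_distinct B a b a' b' : is_frame B ->
  EEF (act (cC a b q0 q1) B) (act (cC a' b' q0 q1) B) -> a = a' /\ b = b'.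
Proof.
move=> hB /eef_sound[M hM]; rewrite !cC_act compFA => /(frame_cancel_l hB).
exact: cmat_cosets_distinct.
Qed.

Lemma controlled_class_not_base B a b : is_frame B ->
  ~ EEF B (act (cC a b q0 q1) B).
Proof.
move=> hB /eef_sound[M hM]; rewrite cC_act => /(frame_cancel_l hB) e.
by move: (cmat_notin_GM a b); rewrite e hM.
Qed.

Lemma CX_coset_class B B' M1 X : M1 \in GM -> X \in [:: CX01; CX10] ->
  fromF B' = compF (compF (fromF B) M1) X -> exists a b, EEF B' (act (cC a b q0 q1) B).
Proof.
move=> hM1 hX eB'; have [a [b [M hM e]]] := CX_double_coset_cover hM1 hX.
by exists a, b; apply: (eef_complete hM); rewrite cC_act e eB' !compFA.
Qed.

Lemma local_CX_local_class B L1 L2 : locCliff L1 -> locCliff L2 ->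
  exists a b, EEF (act (fun p => L1 (cCX q0 q1 (L2 p))) B) (act (cC a b q0 q1) B).
Proof.
move=> /locCliff_represented[M1 h1 e1] /locCliff_represented[M2 h2 e2].
have rL : represents (fun p => L1 (cCX q0 q1 (L2 p))) (compF (compF M1 CX01) M2).
  by move=> p; rewrite e1 (proj1 CX_represented) e2 !phiF_comp.
pose B' := toB (compF (compF (fromF B) M1) CX01).
have [a [b eB']] := CX_coset_class h1 (mem_head _ _) (fromF_toB _ : fromF B' = _).
exists a, b; apply: rt_trans eB'; apply/EEF_sym/(eef_complete h2).
by rewrite (act_represented _ rL) fromF_toB !compFA.
Qed.

Lemma controlled_neighbour B a b : pfg_adj B (act (cC a b q0 q1) B).
Proof.
have [M [M' [hM hM'] e]] := cmat_CX_double_coset a b.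
pose B1 := toB (compF (fromF B) M).
exists B1, (act (cCX q0 q1) B1), q0, q1; split=> //; split.
  by apply: (eef_complete hM); rewrite fromF_toB.
split=> //; apply: (eef_complete hM').
by rewrite (act_represented _ (proj1 CX_represented)) fromF_toB cC_act !compFA e.
Qed.

Lemma neighbour_cover B B' : pfg_adj B B' -> exists a b, EEF B' (act (cC a b q0 q1) B).
Proof.
case=> B1 [B2 [i [j [hij [E1 [E2 eB2]]]]]]; have [M1 h1 e1] := eef_sound E1.
have [X [hX rX]] : exists X, X \in [:: CX01; CX10] /\ represents (cCX i j) X.
  have [r01 r10] := CX_represented.
  by case: (ord2 i) (ord2 j) hij => -> [] -> // _; [exists CX01 | exists CX10];
    rewrite !inE eqxx ?orbT.
have eB2' : fromF B2 = compF (compF (fromF B) M1) X by rewrite eB2 (act_represented _ rX) e1.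
have [a [b E]] := CX_coset_class h1 hX eB2'.
by exists a, b; exact: rt_trans E2 E.
Qed.

Definition ctrl_pairs : seq (pauli1 * pauli1) := [seq (a, b) | a <- pauli1s, b <- pauli1s].
Definition ctrl_pair (k : 'I_9) : pauli1 * pauli1 := nth (PX, PX) ctrl_pairs k.

Lemma ctrl_pair_inj : injective ctrl_pair.
Proof.
move=> k l e; apply/val_inj/eqP.
by rewrite -(@nth_uniq _ (PX, PX) ctrl_pairs k l (ltn_ord k) (ltn_ord l)) //; apply/eqP.
Qed.

Lemma ctrl_pair_surj ab : exists k, ctrl_pair k = ab.
Proof.
have hi : index ab ctrl_pairs < 9 by rewrite index_mem; case: ab => [[] []].
by exists (Ordinal hi); rewrite /ctrl_pair nth_index // -index_mem.
Qed.

Theorem mainTheorem5 :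
  (* (i) nine pairwise distinct EEF classes, none equal to [B0] *)
  (forall a b a' b' : pauli1,
      EEF (act (cC a b q0 q1) (origin 2)) (act (cC a' b' q0 q1) (origin 2)) ->
      a = a' /\ b = b') /\
  (forall a b : pauli1, ~ EEF (origin 2) (act (cC a b q0 q1) (origin 2))) /\
  (* (ii) (L2 CX01 L1) . B0 lies in one of these classes; its conjugation
     map is c_L1 \o c_CX \o c_L2 *)
  (forall L1 L2 : pauli 2 -> pauli 2, locCliff L1 -> locCliff L2 ->
      exists a b : pauli1,
        EEF (act (fun p => L1 (cCX q0 q1 (L2 p))) (origin 2))
            (act (cC a b q0 q1) (origin 2))) /\
  (* consequence: every vertex of [PFG_2] has exactly nine neighbours *)
  (forall B : frame 2, is_frame B ->
      exists Bs : 'I_9 -> frame 2,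
        (forall k, pfg_adj B (Bs k)) /\
        (forall k l, EEF (Bs k) (Bs l) -> k = l) /\
        (forall B', pfg_adj B B' -> exists k, EEF B' (Bs k))).
Proof.
split; [|split; [|split]].
- by move=> a b a' b'; exact: controlled_classes_distinct origin_frame.
- by move=> a b; exact: controlled_class_not_base origin_frame.
- by move=> L1 L2; exact: local_CX_local_class.
move=> B hB; exists (fun k => act (cC (ctrl_pair k).1 (ctrl_pair k).2 q0 q1) B).
split; [|split].
- by move=> k; exact: controlled_neighbour.
- move=> k l /(controlled_classes_distinct hB)[ea eb]; apply: ctrl_pair_inj.
  by rewrite [ctrl_pair k]surjective_pairing ea eb -surjective_pairing.
- move=> B' /neighbour_cover[a [b E]]; have [k ek] := ctrl_pair_surj (a, b).
  by exists k; rewrite ek.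
Qed.
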